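(* A (finite) tree $T$ is semi--H--cordial if and only if $T$ has an odd number of vertices.
   Context: A labeling of a graph $G$ is a map $f:E(G)\to\{-1,+1\}$. Given a labeling $f$, for each vertex $v$ define $f(v)=\sum_{e\in I(v)} f(e)$, where $I(v)$ is the set of edges incident to $v$. For an integer $c$, $e_f(c)$ denotes the number of edges with label $c$, and $v_f(c)$ the number of vertices $v$ with $f(v)=c$. A labeling $f$ of a tree $T$ is semi--H--cordial if $|f(v)|\le 1$ for every vertex $v$, $|e_f(1)-e_f(-1)|\le 1$, and $|v_f(1)-v_f(-1)|\le 1$. A tree is semi--H--cordial if it admits a semi--H--cordial labeling. *)

From mathcomp Require Import all_boot all_order all_algebra.
Set Implicit Arguments. Unset Strict Implicit. Unset Printing Implicit Defensive.
Import Order.TTheory GRing.Theory Num.Theory.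
Local Open Scope ring_scope.

Definition simple_graph (T : finType) (e : rel T) : Prop :=
  symmetric e /\ irreflexive e.

Definition edges (T : finType) (e : rel T) : {set {set T}} :=
  [set E : {set T} | [exists x, exists y, e x y && (E == [set x; y])]].

Definition is_tree (T : finType) (e : rel T) : Prop :=
  [/\ simple_graph e, (0 < #|T|)%N, (forall x y, connect e x y)
    & #|edges e| = #|T|.-1].

(* A labeling is a map E(G) -> {-1,+1}; we represent it by a function on
   vertex sets whose values on edges are in {-1,+1} (values off edges are
   irrelevant). *)
Definition is_labeling (T : finType) (e : rel T) (f : {set T} -> int) : Prop :=
  forall E, E \in edges e -> f E = 1 \/ f E = -1.

Definition vlabel (T : finType) (e : rel T) (f : {set T} -> int) (v : T) : int :=
  \sum_(E in edges e | v \in E) f E.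

Definition e_f (T : finType) (e : rel T) (f : {set T} -> int) (c : int) : nat :=
  #|[set E in edges e | f E == c]|.

Definition v_f (T : finType) (e : rel T) (f : {set T} -> int) (c : int) : nat :=
  #|[set v : T | vlabel e f v == c]|.

Definition semi_H_cordial_labeling (T : finType) (e : rel T) (f : {set T} -> int) : Prop :=
  [/\ is_labeling e f,
      (forall v, `|vlabel e f v| <= 1),
      `|(e_f e f 1)%:Z - (e_f e f (-1))%:Z| <= 1
    & `|(v_f e f 1)%:Z - (v_f e f (-1))%:Z| <= 1].

Definition semi_H_cordial (T : finType) (e : rel T) : Prop :=
  exists f : {set T} -> int, semi_H_cordial_labeling e f.

From mathcomp Require Import all_boot all_order all_algebra zify.
Set Implicit Arguments. Unset Strict Implicit. Unset Printing Implicit Defensive.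
Import Order.TTheory GRing.Theory Num.Theory.
Local Open Scope ring_scope.

(* Counting every edge label at both endpoints gives
   v_f(1) - v_f(-1) = 2 (e_f(1) - e_f(-1)), so the two cordiality bounds force
   e_f(1) = e_f(-1), i.e. an even number |T| - 1 of edges.
   Conversely, root the tree at r and label the edge from each vertex u <> r to
   its parent p u.  A parent-closed odd vertex set other than {r} contains
   either two sibling leaves, or a leaf v whose parent w <> r has no other
   child.  Removing these two vertices keeps the set parent-closed and odd, and
   a labeling with zero sum and incident sums in {-1,0,1} extends back: sibling
   leaves get opposite labels; on the pendant path v - w - p w the edges get
   opposite labels, the sign of the edge w - p w chosen to keep the incident
   sum at p w in range. *)

Lemma card_setD2 (T : finType) (S : {set T}) (a b : T) :
  a \in S -> b \in S -> a != b -> #|S| = #|S :\ a :\ b|.+2.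
Proof.
move=> aS bS ab; rewrite (cardsD1 a) (cardsD1 b (S :\ a)) !inE aS bS eq_sym ab.
by rewrite add1n.
Qed.

Lemma sum_norm_le1 (T : finType) (g : T -> int) : (forall v, `|g v| <= 1) ->
  \sum_v g v = #|[set v | g v == 1]|%:Z - #|[set v | g v == -1]|%:Z.
Proof.
move=> g_le1; rewrite (bigID (fun v => g v == 1)) /=.
rewrite [X in _ + X](bigID (fun v => g v == -1)) /=.
rewrite [X in _ + (_ + X)]big1 => [|v /andP [gv1 gvN1]]; last first.
  by have := g_le1 v; move: gv1 gvN1; move: (g v) => t; lia.
rewrite addr0 -!natz -!sumr_const -sumrN; congr (_ + _); apply: eq_big.
- by move=> v; rewrite inE.
- by move=> v /eqP ->.
- by move=> v; rewrite inE; case: eqP => // ->.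
- by move=> v /andP [_ /eqP ->].
Qed.

Section Labelings.
Variables (T : finType) (e : rel T).

Lemma card_edge E : simple_graph e -> E \in edges e -> #|E| = 2%N.
Proof.
case=> _ irr; rewrite inE => /existsP [x /existsP [y /andP [exy /eqP ->]]].
by rewrite cards2; case: eqP => // xy; rewrite xy irr in exy.
Qed.

Lemma sum_vlabel f : simple_graph e ->
  \sum_v vlabel e f v = (\sum_(E in edges e) f E) *+ 2.
Proof.
move=> sg; rewrite /vlabel.
under eq_bigr => v _ do rewrite big_mkcondr.
rewrite exchange_big /= -sumrMnl; apply: eq_bigr => E EE.
by rewrite -big_mkcond /= sumr_const (card_edge sg EE).
Qed.

Lemma sum_edges_labeling f (G : int -> int) : is_labeling e f ->
  \sum_(E in edges e) G (f E) = G 1 *+ e_f e f 1 + G (-1) *+ e_f e f (-1).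
Proof.
move=> lab; rewrite (bigID (fun E => f E == 1)) /= /e_f -!sumr_const.
congr (_ + _); apply: eq_big.
- by move=> E; rewrite inE.
- by move=> E /andP [_ /eqP ->].
- by move=> E; rewrite inE; case EE: (E \in edges e) => //=; case: (lab E EE) => ->.
- by move=> E /andP [EE]; case: (lab E EE) => ->.
Qed.

Lemma odd_of_semi_H_cordial : is_tree e -> semi_H_cordial e -> odd #|T|.
Proof.
case=> sg T_gt0 _ card_edges [f [lab vl ef vf]].
have sum_f := sum_edges_labeling id lab.
have card_f := sum_edges_labeling (fun=> 1) lab.
have handshake := sum_vlabel f sg.
rewrite sumr_const card_edges /= in card_f.
rewrite (sum_norm_le1 vl) sum_f in handshake.
move: card_f handshake ef vf T_gt0; rewrite /v_f.
move: (e_f e f 1) (e_f e f (-1)) #|[set v | vlabel e f v == 1]|.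
move: #|[set v | vlabel e f v == -1]| #|T| => *; lia.
Qed.

Lemma semi_H_cordial_labeling_of_sum0 f : simple_graph e -> is_labeling e f ->
  (forall v, `|vlabel e f v| <= 1) -> \sum_(E in edges e) f E = 0 ->
  semi_H_cordial_labeling e f.
Proof.
move=> sg lab vl sum0; split => //.
  have := sum_edges_labeling id lab; rewrite sum0 /=.
  by move: (e_f e f 1) (e_f e f (-1)) => *; lia.
have := sum_vlabel f sg; rewrite sum0 (sum_norm_le1 vl) /v_f.
by move: #|[set v | vlabel e f v == 1]| #|[set v | vlabel e f v == -1]| => *; lia.
Qed.

End Labelings.

Lemma exists_parent_map (T : finType) (e : rel T) (r : T) :
  (forall y, connect e r y) ->
  exists p : T -> T, exists d : T -> nat,
    forall u, u != r -> (d (p u) < d u)%N /\ e (p u) u.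
Proof.
move=> conn.
pose reach n u := [exists s : n.-tuple T, path e r s && (last r s == u)].
have reach_ex u : exists n, reach n u.
  case/connectP: (conn u) => s ps ->; exists (size s).
  by apply/existsP; exists (in_tuple s); rewrite ps eqxx.
pose d u := ex_minn (reach_ex u).
have reach_d u n : reach n u -> (d u <= n)%N.
  by rewrite /d; case: ex_minnP => m _ m_min /m_min.
have closer u : u != r -> exists w, e w u && (d w < d u)%N.
  move=> ur; rewrite {2}/d; case: ex_minnP => n /existsP [s] + _.
  case: s => s /= /eqP <-; case/lastP: s => [/eqP ru | s' w].
    by rewrite -ru eqxx in ur.
  rewrite rcons_path last_rcons size_rcons => /andP [/andP [ps' ew] /eqP <-].
  exists (last r s'); rewrite ew ltnS reach_d //.
  by apply/existsP; exists (in_tuple s'); rewrite ps' eqxx.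
exists (fun u => odflt r [pick w | e w u && (d w < d u)%N]), d => u /closer [w].
by case: pickP => [w' /andP [? ?] | /(_ w) ->].
Qed.

Section RootedTree.
Variables (T : finType) (r : T) (p : T -> T) (d : T -> nat).
Hypothesis p_dec : forall u, u != r -> (d (p u) < d u)%N.

Definition parent_closed (S : {set T}) : Prop :=
  r \in S /\ forall u, u \in S -> u != r -> p u \in S.

Definition children (S : {set T}) (u : T) : {set T} :=
  [set c in S | (c != r) && (p c == u)].

(* The label of the edge {v, p v} is L v; the values of L at r and outside S
   are irrelevant. *)
Definition incident_sum (S : {set T}) (L : T -> int) (u : T) : int :=
  \sum_(v in S | (v != r) && ((v == u) || (p v == u))) L v.

Definition balanced_on (S : {set T}) (L : T -> int) : Prop :=
  [/\ forall v, L v = 1 \/ L v = -1,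
      forall u, u \in S -> `|incident_sum S L u| <= 1
    & \sum_(v in S | v != r) L v = 0].

Definition relabel2 (a : T) (x : int) (b : T) (y : int) (L : T -> int) (v : T) :=
  if v == a then x else if v == b then y else L v.

Lemma parent_stable_eq0 (A : {set T}) :
  (forall u, u \in A -> (u != r) && (p u \in A)) -> A = set0.
Proof.
move=> stA; case: (set_0Vmem A) => [// | [u uA]].
case: (arg_minnP d uA) => m /stA /andP [mr pmA] /(_ _ pmA).
by have := p_dec mr; lia.
Qed.

Lemma parent_edge_inj : {in [set~ r] &, injective (fun u => [set u; p u])}.
Proof.
move=> u u'; rewrite !in_setC1 => ur u'r E; apply/eqP; apply: contraT => uu'.
have : u \in [set u'; p u'] by rewrite -E set21.
rewrite in_set2 (negbTE uu') /= => /eqP up.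
have : u' \in [set u; p u] by rewrite E set21.
rewrite in_set2 eq_sym (negbTE uu') /= => /eqP u'p.
by have := p_dec ur; have := p_dec u'r; rewrite -up -u'p; lia.
Qed.

Lemma childrenD1 (S : {set T}) (x u : T) : children (S :\ x) u = children S u :\ x.
Proof. by apply/setP => c; rewrite !inE -andbA. Qed.

Lemma parent_neq_leaf (S : {set T}) (c u : T) :
  children S c = set0 -> u \in S -> u != r -> p u != c.
Proof.
by move=> leaf uS ur; apply/eqP => puc; have := in_set0 u; rewrite -leaf inE uS ur puc eqxx.
Qed.

Lemma incident_sum_leaf (S : {set T}) (L : T -> int) (c : T) :
  c \notin S -> children S c = set0 -> incident_sum S L c = 0.
Proof.
move=> cS leaf; rewrite /incident_sum big1 // => v /andP [vS /andP [vr /orP [/eqP vc | pvc]]].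
  by rewrite -vc vS in cS.
by have := in_set0 v; rewrite -leaf !inE vS vr pvc.
Qed.

Lemma parent_closedD2 (S : {set T}) (a b : T) :
  parent_closed S -> a != r -> b != r ->
  children (S :\ a :\ b) a = set0 -> children (S :\ a :\ b) b = set0 ->
  parent_closed (S :\ a :\ b).
Proof.
move=> [rS clS] ar br leafa leafb; split; first by rewrite !inE rS eq_sym br eq_sym ar.
move=> u uS' ur; have := uS'; rewrite !inE => /and3P [_ _ uS].
rewrite clS // andbT; apply/andP; split; apply/eqP => pu.
  by have := in_set0 u; rewrite -leafb inE uS' ur pu eqxx.
by have := in_set0 u; rewrite -leafa inE uS' ur pu eqxx.
Qed.

Lemma big_relabel2 (S : {set T}) (a b : T) (x y : int) (L : T -> int) (Q : pred T) :
  a \in S -> b \in S -> a != b ->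
  \sum_(v in S | Q v) relabel2 a x b y L v =
  (if Q a then x else 0) + (if Q b then y else 0) + \sum_(v in S :\ a :\ b | Q v) L v.
Proof.
move=> aS bS ab; have ba : b != a by rewrite eq_sym.
rewrite !big_mkcondr (bigD1 a) //= (bigD1 b) /=; last by rewrite bS ba.
rewrite /relabel2 eqxx (negbTE ba) eqxx addrA; congr (_ + _).
apply: eq_big => [v | v /andP [/andP [_ va] vb]].
  by rewrite !inE andbC [_ && (v \in S)]andbC.
by rewrite (negbTE va) (negbTE vb).
Qed.

Lemma incident_sum_relabel2 (S : {set T}) (a b : T) (x y : int) (L : T -> int) (u : T) :
  a \in S -> b \in S -> a != b -> a != r -> b != r ->
  incident_sum S (relabel2 a x b y L) u =
  (if (a == u) || (p a == u) then x else 0) + (if (b == u) || (p b == u) then y else 0)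
  + incident_sum (S :\ a :\ b) L u.
Proof. by move=> aS bS ab ar br; rewrite /incident_sum big_relabel2 //= ar br. Qed.

Lemma balanced_twin_leaves (S : {set T}) (w a b : T) (L : T -> int) :
  a \in children S w -> b \in children S w -> a != b ->
  children S a = set0 -> children S b = set0 ->
  balanced_on (S :\ a :\ b) L -> balanced_on S (relabel2 a 1 b (-1) L).
Proof.
rewrite !inE => /and3P [aS ar /eqP pa] /and3P [bS br /eqP pb] ab leafa leafb [L1 L2 L3].
have leafD2 c : children S c = set0 -> children (S :\ a :\ b) c = set0.
  by rewrite !childrenD1 => ->; rewrite !set0D.
have aS' : a \notin S :\ a :\ b by rewrite !inE eqxx andbF.
have bS' : b \notin S :\ a :\ b by rewrite !inE eqxx.
split.
- by move=> v; rewrite /relabel2; case: ifP => _; [left | case: ifP => _; [right | exact: L1]].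
- move=> u uS; rewrite incident_sum_relabel2 //.
  have [-> | ua] := eqVneq u a.
    rewrite (eq_sym b) (negbTE ab) (negbTE (parent_neq_leaf leafa bS br)).
    by rewrite incident_sum_leaf ?leafD2.
  have [-> | ub] := eqVneq u b.
    rewrite (negbTE (parent_neq_leaf leafb aS ar)).
    by rewrite incident_sum_leaf ?leafD2.
  have uS' : u \in S :\ a :\ b by rewrite !inE ua ub.
  rewrite pa pb /=.
  by case: (w == u); rewrite ?addrN !add0r; apply: L2.
- by rewrite big_relabel2 //= ar br L3.
Qed.

Lemma balanced_pendant_path (S : {set T}) (w v : T) (L : T -> int) :
  w \in S -> w != r -> children S w = [set v] -> children S v = set0 ->
  balanced_on (S :\ v :\ w) L -> exists L', balanced_on S L'.
Proof.
move=> wS wr cw leafv [L1 L2 L3].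
have : v \in children S w by rewrite cw set11.
rewrite inE => /and3P [vS vr /eqP pv].
have vw : v != w by apply/eqP => vw; have := p_dec vr; rewrite pv vw ltnn.
set S' := S :\ v :\ w.
have vS' : v \notin S' by rewrite !inE eqxx andbF.
have wS' : w \notin S' by rewrite !inE eqxx.
have leafw' : children S' w = set0 by rewrite !childrenD1 cw setDv set0D.
have leafv' : children S' v = set0 by rewrite !childrenD1 leafv !set0D.
pose s : int := if incident_sum S' L (p w) == 1 then -1 else 1.
have s_sign : s = 1 \/ s = -1 by rewrite /s; case: ifP; [right | left].
exists (relabel2 v (- s) w s L); split.
- move=> u; rewrite /relabel2; case: ifP => _; last case: ifP => _; last exact: L1.
    by case: s_sign => ->; [right | left].
  exact: s_sign.
- move=> u uS; rewrite incident_sum_relabel2 //.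
  have [-> | uv] := eqVneq u v.
    rewrite (eq_sym w) (negbTE vw) (negbTE (parent_neq_leaf leafv wS wr)).
    by rewrite incident_sum_leaf //; case: s_sign => ->.
  have [-> | uw] := eqVneq u w.
    by rewrite pv eqxx orbT incident_sum_leaf // addNr.
  have uS' : u \in S' by rewrite !inE uv uw.
  rewrite pv /= (eq_sym w) (negbTE uw) add0r.
  case: eqP => [pwu | _]; last by rewrite add0r; apply: L2.
  have := L2 _ uS'; rewrite -pwu /s.
  by case: eqP => [-> // | ]; move: (incident_sum S' L (p w)) => t; lia.
- by rewrite big_relabel2 //= vr wr L3 addNr.
Qed.

Lemma exists_reducible_pair (S : {set T}) (u0 : T) :
  parent_closed S -> odd #|S| -> u0 \in S -> u0 != r ->
  (exists w a b, [/\ a \in children S w, b \in children S w, a != b,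
                     children S a = set0 & children S b = set0]) \/
  (exists w v, [/\ w \in S, w != r, children S w = [set v] & children S v = set0]).
Proof.
move=> [rS clS] oddS u0S u0r.
pose is_parent := [pred x | (x \in S) && (children S x != set0)].
have : is_parent (p u0).
  by rewrite /= clS //=; apply/set0Pn; exists u0; rewrite !inE u0S u0r eqxx.
(* A deepest parent: all its children are leaves. *)
case/(arg_maxnP d) => w /andP [wS w_parent] w_max.
have leaves c : c \in children S w -> children S c = set0.
  rewrite inE => /and3P [cS cr /eqP pc]; apply/eqP; apply: contraT => c_parent.
  by have := w_max c; rewrite /= cS c_parent => /(_ isT); have := p_dec cr; rewrite pc; lia.
have [/card_gt1P [a [b [aw bw ab]]] | le1] := ltnP 1 #|children S w|.
  by left; exists w, a, b; split => //; apply: leaves.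
have [v cw] : exists v, children S w = [set v].
  by apply/cards1P; rewrite eqn_leq le1 card_gt0.
have leafv : children S v = set0 by apply: leaves; rewrite cw set11.
right; exists w, v; split => //; apply/eqP => wr.
have : v \in children S w by rewrite cw set11.
rewrite inE => /and3P [vS vr _].
(* If w = r, then S :\ r :\ v is stable under p, hence empty, and #|S| = 2. *)
have rv : r != v by rewrite eq_sym.
have := card_setD2 rS vS rv.
rewrite (parent_stable_eq0 (A := S :\ r :\ v)) ?cards0 => [cardS | u].
  by rewrite cardS in oddS.
rewrite !inE => /and3P [uv ur uS]; rewrite ur (parent_neq_leaf leafv uS ur) clS // andbT /=.
by apply: contraNneq uv => pur; rewrite -in_set1 -cw inE uS ur pur -wr eqxx.
Qed.

Lemma balanced_on_odd (S : {set T}) :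
  parent_closed S -> odd #|S| -> exists L, balanced_on S L.
Proof.
have [n] := ubnP #|S|; elim: n S => // n IH S ltS clS oddS.
have IH2 a b : a \in S -> b \in S -> a != b -> a != r -> b != r ->
    children (S :\ a :\ b) a = set0 -> children (S :\ a :\ b) b = set0 ->
    exists L, balanced_on (S :\ a :\ b) L.
  move=> aS bS ab ar br leafa leafb; have cardS := card_setD2 aS bS ab.
  apply: IH; [by move: ltS; rewrite cardS; lia | exact: parent_closedD2 |].
  by move: oddS; rewrite cardS /= negbK.
have [/exists_inP [u0 u0S u0r] | /exists_inPn only_r] := boolP [exists u in S, u != r].
  case: (exists_reducible_pair clS oddS u0S u0r).
    move=> [w [a [b [aw bw ab leafa leafb]]]].
    move: (aw) (bw); rewrite !inE => /and3P [aS ar _] /and3P [bS br _].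
    have [L balL] : exists L, balanced_on (S :\ a :\ b) L.
      by apply: IH2; rewrite // !childrenD1 ?leafa ?leafb !set0D.
    exists (relabel2 a 1 b (-1) L); exact: balanced_twin_leaves aw bw ab leafa leafb balL.
  move=> [w [v [wS wr cw leafv]]].
  have : v \in children S w by rewrite cw set11.
  rewrite inE => /and3P [vS vr /eqP pv].
  have [L balL] : exists L, balanced_on (S :\ v :\ w) L.
    apply: IH2; rewrite // ?childrenD1 ?leafv ?cw ?setDv ?set0D //.
    by apply/eqP => vw; have := p_dec vr; rewrite pv vw ltnn.
  exact: balanced_pendant_path wS wr cw leafv balL.
exists (fun=> 1); split => [v | u uS | ]; [by left | |].
  by rewrite /incident_sum big1 // => v /andP [/only_r /negPn ->].
by rewrite big1 // => v /andP [/only_r /negPn ->].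
Qed.

End RootedTree.

Lemma edges_parent (T : finType) (e : rel T) (r : T) (p : T -> T) :
  #|edges e| = #|T|.-1 -> (forall u, u != r -> e (p u) u) ->
  {in [set~ r] &, injective (fun u => [set u; p u])} ->
  edges e = [set [set u; p u] | u in [set~ r]].
Proof.
move=> card_edges pe p_inj; apply/eqP; rewrite eq_sym eqEcard card_in_imset //.
rewrite cardsC1 card_edges leqnn andbT; apply/subsetP => E /imsetP [u].
rewrite in_setC1 => ur ->; rewrite inE; apply/existsP; exists (p u); apply/existsP; exists u.
by rewrite pe // setUC eqxx.
Qed.

Section ParentLabeling.
Variables (T : finType) (e : rel T) (r : T) (p : T -> T).
Hypothesis p_inj : {in [set~ r] &, injective (fun u => [set u; p u])}.
Hypothesis edgesE : edges e = [set [set u; p u] | u in [set~ r]].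

Definition parent_labeling (L : T -> int) (E : {set T}) : int :=
  \sum_(u in [set~ r] | E == [set u; p u]) L u.

Lemma parent_labeling_edge (L : T -> int) (u : T) :
  u != r -> parent_labeling L [set u; p u] = L u.
Proof.
move=> ur; rewrite /parent_labeling (big_pred1 u) // => v /=; rewrite in_setC1.
have [-> | vu] := eqVneq v u; first by rewrite ur eqxx.
apply/negbTE/andP => -[vr /eqP E]; move/eqP: vu; apply.
by apply: p_inj; rewrite ?in_setC1.
Qed.

Lemma is_labeling_parent_labeling (L : T -> int) :
  (forall v, L v = 1 \/ L v = -1) -> is_labeling e (parent_labeling L).
Proof.
move=> L1 E; rewrite edgesE => /imsetP [u]; rewrite in_setC1 => ur ->.
by rewrite parent_labeling_edge.
Qed.

Lemma sum_parent_labeling (L : T -> int) :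
  \sum_(E in edges e) parent_labeling L E = \sum_(u | u != r) L u.
Proof.
rewrite edgesE big_imset //=; apply: eq_big => u; rewrite in_setC1 //.
exact: parent_labeling_edge.
Qed.

Lemma vlabel_parent_labeling (L : T -> int) (x : T) :
  vlabel e (parent_labeling L) x = incident_sum r p [set: T] L x.
Proof.
rewrite /vlabel /incident_sum edgesE big_mkcondr big_imset //=.
rewrite [RHS](eq_bigl (fun v => (v \in [set~ r]) && ((v == x) || (p v == x)))); last first.
  by move=> v; rewrite in_setT in_setC1.
rewrite [RHS]big_mkcondr; apply: eq_bigr => v; rewrite in_setC1 => vr.
by rewrite parent_labeling_edge // in_set2 (eq_sym x v) (eq_sym x (p v)).
Qed.

End ParentLabeling.

Theorem theorem1 (T : finType) (e : rel T) :
  is_tree e -> (semi_H_cordial e <-> odd #|T|).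
Proof.
move=> tree; split; first exact: odd_of_semi_H_cordial.
case: tree => sg /card_gt0P [r _] conn card_edges oddT.
have [p [d parent]] := exists_parent_map (conn r).
have p_dec u (ur : u != r) := (parent u ur).1.
have p_inj := parent_edge_inj p_dec.
have edgesE := edges_parent card_edges (fun u ur => (parent u ur).2) p_inj.
have closedT : parent_closed r p [set: T] by split=> [|u _ _]; rewrite in_setT.
have oddT' : odd #|[set: T]| by rewrite cardsT.
have [L [L1 L2 L3]] := balanced_on_odd p_dec closedT oddT'.
exists (parent_labeling r p L); apply: semi_H_cordial_labeling_of_sum0 => //.
- exact: is_labeling_parent_labeling.
- by move=> x; rewrite vlabel_parent_labeling //; apply: L2; rewrite in_setT.
- by rewrite sum_parent_labeling // -[RHS]L3; apply: eq_bigl => u; rewrite in_setT.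
Qed.
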